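(* Let $(R,\mathfrak m)$ be a zero-dimensional Gorenstein local ring and let $I\subseteq\mathfrak m$ be an ideal with $I^r\ne0$ and $I^{r+1}=0$. If the associated graded ring $G(I)=\bigoplus_{i\ge0}I^i/I^{i+1}$ is Gorenstein, then $I^i/I^{i+1}$ is a faithful $(R/I)$-module for $0\le i\le r$. *)

From HB Require Import structures.
From mathcomp Require Import all_boot all_algebra.
From mathcomp Require Import boolp.

Set Implicit Arguments.
Unset Strict Implicit.
Unset Printing Implicit Defensive.

Import GRing.Theory.
Local Open Scope ring_scope.
Local Open Scope quotient_scope.

Section CommAlg.
Variable S : comPzRingType.

Definition is_ideal (A : S -> Prop) : Prop :=
  [/\ A 0, (forall x y, A x -> A y -> A (x + y)) & (forall a x, A x -> A (a * x))].

Definition proper_ideal (A : S -> Prop) : Prop := is_ideal A /\ ~ A 1.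

Definition maximal_ideal (A : S -> Prop) : Prop :=
  proper_ideal A /\
  forall B, proper_ideal B -> (forall x, A x -> B x) -> forall x, B x -> A x.

Definition prime_ideal (A : S -> Prop) : Prop :=
  proper_ideal A /\ forall x y, A (x * y) -> A x \/ A y.

Definition noetherian : Prop :=
  forall C : nat -> S -> Prop, (forall n, is_ideal (C n)) ->
    (forall n x, C n x -> C n.+1 x) ->
    exists N, forall n, (N <= n)%N -> forall x, C n x -> C N x.

Definition zero_dimensional : Prop :=
  forall P, prime_ideal P -> maximal_ideal P.

Definition local_ring (m : S -> Prop) : Prop :=
  maximal_ideal m /\ forall n, maximal_ideal n -> forall x, n x <-> m x.

Definition socle (m : S -> Prop) : S -> Prop :=
  fun x => forall y, m y -> y * x = 0.

(** the socle is a one-dimensional S/m-vector space *)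
Definition socle_dim1 (m : S -> Prop) : Prop :=
  (exists s, socle m s /\ s <> 0) /\
  forall s t, socle m s -> socle m t -> s <> 0 -> exists a, t = a * s.

(** zero-dimensional (Noetherian) Gorenstein local ring with maximal ideal m:
    an Artinian local ring of type 1 *)
Definition gorenstein_zero_dim_local (m : S -> Prop) : Prop :=
  [/\ noetherian, zero_dimensional, local_ring m & socle_dim1 m].

Definition gorenstein_zero_dim : Prop := exists m, gorenstein_zero_dim_local m.

End CommAlg.

Section Powers.
Variable R : comPzRingType.
Variable I : R -> Prop.

Fixpoint prods (n : nat) : R -> Prop :=
  match n with
  | 0 => fun x => x = 1
  | n'.+1 => fun x => exists y z, [/\ prods n' y, I z & x = y * z]
  end.

Definition idealpow (n : nat) : R -> Prop :=
  fun x => forall K, is_ideal K -> (forall y, prods n y -> K y) -> K x.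

Lemma idealpow_ideal n : is_ideal (idealpow n).
Proof.
split.
- by move=> K [K0 _ _] _.
- by move=> x y hx hy K hK hP; case: (hK) => _ hD _; apply: hD; [apply: hx|apply: hy].
- by move=> a x hx K hK hP; case: (hK) => _ _ hM; apply: hM; apply: hx.
Qed.

Lemma idealpow_0 n : idealpow n 0.
Proof. by case: (idealpow_ideal n). Qed.

Lemma idealpowD n x y : idealpow n x -> idealpow n y -> idealpow n (x + y).
Proof. by case: (idealpow_ideal n) => _ hD _; apply: hD. Qed.

Lemma idealpowN n x : idealpow n x -> idealpow n (- x).
Proof. by move=> hx; rewrite -mulN1r; case: (idealpow_ideal n) => _ _; apply. Qed.

Lemma idealpowB n x y : idealpow n x -> idealpow n y -> idealpow n (x - y).
Proof. by move=> hx hy; apply: idealpowD => //; apply: idealpowN. Qed.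

Lemma idealpow0 x : idealpow 0 x.
Proof. by move=> K [_ _ hM] hP; rewrite -[x]mulr1; apply: hM; exact: hP. Qed.

Lemma prodsM i j x y : prods i x -> prods j y -> prods (i + j)%N (x * y).
Proof.
move=> hx; elim: j y => [|j IH] y /=.
  by move=> ->; rewrite addn0 mulr1.
move=> [y' [z [hy' hz ->]]]; rewrite addnS /=.
by exists (x * y'), z; split; [exact: IH|exact: hz|rewrite mulrA].
Qed.

Lemma idealpowM i j x y : idealpow i x -> idealpow j y -> idealpow (i + j)%N (x * y).
Proof.
move=> hx hy K hK hP; have [K0 KD KM] := hK.
pose K1 := fun a => forall b, prods j b -> K (a * b).
have hK1 : is_ideal K1.
  split.
  - by move=> b _; rewrite mul0r.
  - by move=> a a' ha ha' b hb; rewrite mulrDl; apply: KD; [apply: ha|apply: ha'].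
  - by move=> c a ha b hb; rewrite -mulrA; apply: KM; apply: ha.
have hx1 : K1 x by apply: hx => // a ha b hb; apply: hP; exact: prodsM.
pose K2 := fun b => K (x * b).
have hK2 : is_ideal K2.
  split.
  - by rewrite /K2 mulr0.
  - by move=> b b' hb hb'; rewrite /K2 mulrDr; apply: KD.
  - by move=> c b hb; rewrite /K2 mulrCA; apply: KM.
exact: (hy K2 hK2 hx1).
Qed.

End Powers.

(** * The associated graded ring G(I) = R[It] / I R[It] *)
Section AssocGraded.
Variable R : comNzRingType.
Variable I : R -> Prop.

Definition reesP : {pred {poly R}} := fun p => `[< forall i, idealpow I i p`_i >].

Lemma rees_subring_closed : subring_closed reesP.
Proof.
split.
- apply/asboolP => i; rewrite coef1; case: i => [|i]; first exact: idealpow0.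
  by rewrite mulr0n; apply: idealpow_0.
- move=> p q /asboolP hp /asboolP hq; apply/asboolP => i; rewrite coefB.
  exact: idealpowB.
- move=> p q /asboolP hp /asboolP hq; apply/asboolP => i; rewrite coefM.
  apply: (big_ind (idealpow I i)); [exact: idealpow_0|exact: idealpowD|].
  move=> j _; have := idealpowM (hp j) (hq (i - j)%N).
  by rewrite subnKC // -ltnS.
Qed.

Record rees_algebra := ReesElt { rees_val : {poly R}; rees_valP : rees_val \in reesP }.

HB.instance Definition _ := [isSub for rees_val].
HB.instance Definition _ := [Choice of rees_algebra by <:].
HB.instance Definition _ :=
  GRing.SubChoice_isSubComNzRing.Build _ _ rees_algebra rees_subring_closed.

(** the ideal I R[It] = { sum a_i t^i | a_i \in I^(i+1) } of R[It] *)
Definition grJ : {pred rees_algebra} :=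
  fun p => `[< forall i, idealpow I i.+1 (rees_val p)`_i >].

Lemma grJ_zmod_closed : zmod_closed grJ.
Proof.
split.
- by apply/asboolP => i /=; rewrite coef0; apply: idealpow_0.
- move=> p q /asboolP hp /asboolP hq; apply/asboolP => i.
  rewrite (_ : rees_val (p - q) = rees_val p - rees_val q) // coefB.
  exact: idealpowB.
Qed.

HB.instance Definition _ := GRing.isZmodClosed.Build _ grJ grJ_zmod_closed.

Lemma grJM (a u : rees_algebra) : u \in grJ -> a * u \in grJ.
Proof.
move=> /asboolP hu; apply/asboolP => i; rewrite (_ : rees_val (a * u) = rees_val a * rees_val u) // coefM.
have /asboolP ha := rees_valP a.
apply: (big_ind (idealpow I i.+1)); [exact: idealpow_0|exact: idealpowD|].
move=> j _; have := idealpowM (ha j) (hu (i - j)%N).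
by rewrite addnS subnKC // -ltnS.
Qed.

Definition assoc_graded := Quotient.quot grJ.

Local Notation Q := assoc_graded.
HB.instance Definition _ := GRing.Zmodule.on Q.
HB.instance Definition _ := EqQuotient.on Q.

Definition gr_one : Q := lift_cst Q 1.
Definition gr_mul := lift_op2 Q *%R.

Canonical gr_pi_one_morph := PiConst gr_one.

Lemma gr_pi_mul : {morph \pi : x y / x * y >-> gr_mul x y}.
Proof.
move=> x y; unlock gr_mul; apply/eqP; rewrite piE Quotient.equivE.
rewrite -[_ * _](addrNK (x * repr (\pi_Q y))) -mulrBr.
rewrite -addrA -mulrBl rpredD //.
  by apply: grJM; rewrite Quotient.idealrDE opprK reprK.
by rewrite mulrC; apply: grJM; rewrite Quotient.idealrDE opprK reprK.
Qed.
Canonical gr_pi_mul_morph := PiMorph2 gr_pi_mul.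

Lemma gr_mulA : associative gr_mul.
Proof. by move=> x y z; rewrite -[x]reprK -[y]reprK -[z]reprK !piE mulrA. Qed.

Lemma gr_mulC : commutative gr_mul.
Proof. by move=> x y; rewrite -[x]reprK -[y]reprK !piE mulrC. Qed.

Lemma gr_mul1 : left_id gr_one gr_mul.
Proof. by move=> x; rewrite -[x]reprK !piE mul1r. Qed.

Lemma gr_mulDl : left_distributive gr_mul +%R.
Proof.
move=> x y z; rewrite -[x]reprK -[y]reprK -[z]reprK.
by rewrite !piE mulrDl.
Qed.

HB.instance Definition _ :=
  GRing.Zmodule_isComPzRing.Build Q gr_mulA gr_mulC gr_mul1 gr_mulDl.

End AssocGraded.

(** I^i / I^(i+1) is a faithful R/I-module: its annihilator in R is exactly I
    (the inclusion I \subseteq ann always holds) *)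
Definition faithful_graded_piece (R : comPzRingType) (I : R -> Prop) (i : nat) : Prop :=
  forall a : R, (forall x, idealpow I i x -> idealpow I i.+1 (a * x)) -> I a.

From mathcomp Require Import all_boot all_algebra.
From mathcomp Require Import boolp.

Set Implicit Arguments.
Unset Strict Implicit.
Unset Printing Implicit Defensive.

Import GRing.Theory.
Local Open Scope ring_scope.
Local Open Scope quotient_scope.

(* Suppose a \notin I kills I^i/I^(i+1).  Then a kills I^r, and for 0 <> w in I^r
   the classes of a in degree 0 and of w t^r in degree r are nonzero in the
   Artinian local ring G = G(I).  Every nonzero ideal of G contains a nonzero
   socle element and the socle is simple, so G a and G (w t^r) meet nontrivially.
   But multiples of w t^r live in degree r alone, where multiples of a vanish
   because a I^r = 0. *)

Section IdealPowers.
Variables (R : comPzRingType) (I : R -> Prop).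

Lemma prods_idealpow n y : prods I n y -> idealpow I n y.
Proof. by move=> hy K _; apply. Qed.

Lemma idealpowMl n a x : idealpow I n x -> idealpow I n (a * x).
Proof. by case: (idealpow_ideal I n) => _ _; apply. Qed.

Lemma prods_idealpow_le n k y : (k <= n)%N -> prods I n y -> idealpow I k y.
Proof.
elim: n k y => [|n IHn] k y; first by rewrite leqn0 => /eqP -> /= ->; exact: idealpow0.
rewrite leq_eqVlt ltnS => /orP[/eqP -> | le_kn]; first exact: prods_idealpow.
by move=> /= [y' [z [hy' _ ->]]]; rewrite mulrC; apply: idealpowMl; exact: IHn hy'.
Qed.

Lemma idealpow_le n k x : (k <= n)%N -> idealpow I n x -> idealpow I k x.
Proof.
move=> le_kn hx; apply: hx; first exact: idealpow_ideal.
by move=> y; apply: prods_idealpow_le.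
Qed.

Lemma prods_split i k y : prods I (i + k) y ->
  exists y1 y2, [/\ prods I i y1, prods I k y2 & y = y1 * y2].
Proof.
elim: k y => [|k IHk] y; first by rewrite addn0 => hy; exists y, 1; rewrite mulr1.
rewrite addnS => -[y' [z [/IHk [y1 [y2 [h1 h2 ->]]] hz ->]]].
by exists y1, (y2 * z); split => //; [exists y2, z | rewrite mulrA].
Qed.

Lemma idealpow1 x : is_ideal I -> idealpow I 1 x -> I x.
Proof. by move=> hI; apply=> // _ [_ [z [-> hz ->]]]; rewrite mul1r. Qed.

Lemma annihilates_graded_piece_le i j a : (i <= j)%N ->
    (forall x, idealpow I i x -> idealpow I i.+1 (a * x)) ->
  forall x, idealpow I j x -> idealpow I j.+1 (a * x).
Proof.
move=> le_ij ha x hx; apply: (hx (fun x => idealpow I j.+1 (a * x))).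
  split=> [|u v hu hv|c u hu]; first by rewrite mulr0; exact: idealpow_0.
    by rewrite mulrDr; apply: idealpowD.
  by rewrite mulrCA; apply: idealpowMl.
rewrite -(subnKC le_ij) => y /prods_split [y1 [y2 [h1 h2 ->]]].
rewrite mulrA -addSn; apply: idealpowM; last exact: prods_idealpow.
by apply: ha; exact: prods_idealpow.
Qed.

End IdealPowers.

Section ArtinianLocal.
Variable S : comPzRingType.

Definition subideal (P Q : S -> Prop) : Prop := forall x, P x -> Q x.

Lemma noetherian_maximal_member (F : (S -> Prop) -> Prop) : noetherian S ->
    (forall P, F P -> is_ideal P) -> (exists P, F P) ->
  exists2 P, F P & forall Q, F Q -> subideal P Q -> subideal Q P.
Proof.
move=> hN F_ideal [P0 FP0]; apply: contrapT => no_max.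
have bigger (P : {P | F P}) : exists Q : {Q | F Q},
    subideal (sval P) (sval Q) /\ exists x, sval Q x /\ ~ sval P x.
  case: P => P FP; apply: contrapT => no_bigger; apply: no_max; exists P => // Q FQ PQ x Qx.
  apply: contrapT => nPx; apply: no_bigger; exists (exist _ Q FQ); split => //.
  by exists x.
pose next P := sval (cid (bigger P)).
pose chain n := iter n next (exist _ P0 FP0).
have [N stable] := hN (fun n => sval (chain n))
  (fun n => F_ideal _ (svalP (chain n))) (fun n => (svalP (cid (bigger (chain n)))).1).
have [_ [x [Qx nPx]]] := svalP (cid (bigger (chain N))).
exact/nPx/(stable N.+1).
Qed.

Definition ann (z : S) : S -> Prop := fun u => u * z = 0.

Lemma ann_ideal z : is_ideal (ann z).
Proof.
split=> [|u v hu hv|c u hu]; rewrite /ann ?mul0r //; first by rewrite mulrDl hu hv addr0.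
by rewrite -mulrA hu mulr0.
Qed.

Definition avoids_powers (x : S) (P : S -> Prop) : Prop :=
  is_ideal P /\ forall n, ~ P (x ^+ n).

Lemma avoids_powers_maximal_prime x P : avoids_powers x P ->
    (forall Q, avoids_powers x Q -> subideal P Q -> subideal Q P) ->
  prime_ideal P.
Proof.
move=> [[P0 PD PM] Pn] Pmax.
have power_in_sum y : ~ P y -> exists n p g, P p /\ x ^+ n = p + g * y.
  move=> nPy; apply: contrapT => no_power; apply: nPy.
  pose Q z := exists p g, P p /\ z = p + g * y.
  have avQ : avoids_powers x Q.
    split=> [|n [p [g [hp e]]]]; last by apply: no_power; exists n, p, g.
    split=> [|_ _ [p1 [g1 [h1 ->]]] [p2 [g2 [h2 ->]]]|a _ [p1 [g1 [h1 ->]]]].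
    - by exists 0, 0; rewrite mul0r addr0.
    - by exists (p1 + p2), (g1 + g2); rewrite mulrDl addrACA; split => //; exact: PD.
    - by exists (a * p1), (a * g1); rewrite mulrDr mulrA; split => //; exact: PM.
  apply: (Pmax Q avQ) => [z Pz|]; first by exists z, 0; rewrite mul0r addr0.
  by exists 0, 1; rewrite add0r mul1r.
split; first by split => //; rewrite -(expr0 x); exact: Pn.
move=> y z Pyz; apply: contrapT => /not_orP [/power_in_sum [a [p [g [hp ea]]]]].
move=> /power_in_sum [b [p' [g' [hp' eb]]]]; apply: (Pn (a + b)%N).
rewrite exprD ea eb mulrDl !mulrDr mulrACA.
apply: (PD); first by apply: (PD); [apply: PM | rewrite mulrC; apply: PM].
by apply: (PD); apply: (PM).
Qed.

Lemma local_zero_dim_nilpotent (m : S -> Prop) x : noetherian S -> zero_dimensional S ->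
  local_ring m -> m x -> exists n, x ^+ n = 0.
Proof.
move=> hN hZ [_ m_unique] mx; apply: contrapT => /forallNP nz.
have [P avP Pmax] : exists2 P, avoids_powers x P &
    forall Q, avoids_powers x Q -> subideal P Q -> subideal Q P.
  apply: noetherian_maximal_member => [//|P []//|].
  exists (fun z => z = 0); split=> [|n]; last exact: nz.
  split=> [//|_ _ -> ->|a _ ->]; [exact: addr0 | exact: mulr0].
have Px : P x := (m_unique P (hZ P (avoids_powers_maximal_prime avP Pmax)) x).2 mx.
by case: avP => _ /(_ 1%N); rewrite expr1.
Qed.

Lemma socle_multiple (m : S -> Prop) y : noetherian S -> zero_dimensional S -> local_ring m ->
  y <> 0 -> exists g, socle m (g * y) /\ g * y <> 0.
Proof.
move=> hN hZ hL y0.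
pose F P := exists g, g * y <> 0 /\ P = ann (g * y).
have [_ [g [gy0 ->]] ann_max] : exists2 P, F P &
    forall Q, F Q -> subideal P Q -> subideal Q P.
  apply: noetherian_maximal_member => [//|_ [g [_ ->]]|]; first exact: ann_ideal.
  by exists (ann y), 1; rewrite mul1r.
exists g; split => // u mu; apply: contrapT => ugy0.
have u_nonnil n : u ^+ n.+1 * (g * y) <> 0.
  elim: n => [|n IHn]; first by rewrite expr1.
  have Fu : F (ann (u ^+ n.+1 * (g * y))) by exists (u ^+ n.+1 * g); rewrite -mulrA.
  move=> h; apply/ugy0/(ann_max _ Fu); last by rewrite /ann mulrA -exprS.
  by move=> v hv; rewrite /ann mulrCA hv mulr0.
have [n un0] := local_zero_dim_nilpotent hN hZ hL mu.
by apply: (u_nonnil n); rewrite exprS un0 mulr0 mul0r.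
Qed.

End ArtinianLocal.

Section AssociatedGraded.
Variables (R : comNzRingType) (I : R -> Prop).
Local Notation G := (assoc_graded I).

Lemma gr_piM : {morph \pi_G : p q / p * q}.
Proof. exact: gr_pi_mul. Qed.

Lemma monomial_in_rees n c : idealpow I n c -> c%:P * 'X^n \in reesP I.
Proof.
move=> hc; apply/asboolP => j; rewrite coefCM coefXn.
by case: eqP => [-> | _]; rewrite ?mulr1 ?mulr0 //; exact: idealpow_0.
Qed.

(* Junk value 0 when c is not in I^n. *)
Definition rees_monomial (c : R) (n : nat) : rees_algebra I := insubd 0 (c%:P * 'X^n).

Lemma rees_monomialE n c : idealpow I n c -> val (rees_monomial c n) = c%:P * 'X^n.
Proof. by move/monomial_in_rees; exact: insubdK. Qed.

Lemma gr_eq_coef (p q : rees_algebra I) n : \pi_G p = \pi_G q ->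
  idealpow I n.+1 ((val p)`_n - (val q)`_n).
Proof.
move/eqP; rewrite -Quotient.idealrBE => /asboolP/(_ n).
by rewrite -[rees_val _]/(val (p - q)) rmorphB coefB.
Qed.

Lemma gr_monomial_neq0 n c : idealpow I n c -> ~ idealpow I n.+1 c ->
  \pi_G (rees_monomial c n) <> 0.
Proof.
move=> hc ncn; rewrite -(raddf0 \pi_G) => /(gr_eq_coef (n := n)).
by rewrite rees_monomialE // coefCM coefXn eqxx mulr1 coef0 subr0.
Qed.

Section TopDegree.
Variable r : nat.
Hypothesis Ir1_eq0 : forall x, idealpow I r.+1 x -> x = 0.

Lemma rees_mul_top_monomial (p : rees_algebra I) w : idealpow I r w ->
  val p * (w%:P * 'X^r) = ((val p)`_0 * w)%:P * 'X^r.
Proof.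
move=> hw; apply/polyP => j; have /asboolP hp := valP p.
rewrite mulrA !coefMXn coefMC coefC.
case: (ltngtP j r) => [// | lt_rj | ->]; last by rewrite subnn.
rewrite subn_eq0 leqNgt lt_rj; apply: Ir1_eq0; apply: (idealpow_le lt_rj).
by rewrite -{1}(subnK (ltnW lt_rj)); exact: idealpowM (hp _) hw.
Qed.

Lemma gr_top_monomial_meet_ann a w :
  (forall x, idealpow I r x -> a * x = 0) -> idealpow I r w ->
  forall g h : G, g * \pi_G (rees_monomial w r) = h * \pi_G (rees_monomial a 0) ->
  g * \pi_G (rees_monomial w r) = 0.
Proof.
move=> aIr hw g h; rewrite -[g]reprK -[h]reprK -!gr_piM.
move=> /(gr_eq_coef (n := r)) /Ir1_eq0.
rewrite !rmorphM /= (rees_monomialE hw) (rees_monomialE (idealpow0 a)).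
rewrite rees_mul_top_monomial // expr0 mulr1 coefMC coefCM coefXn eqxx mulr1.
have /asboolP hh := valP (repr h); rewrite [_ * a]mulrC (aIr _ (hh r)) subr0 => gw0.
have -> : repr g * rees_monomial w r = 0.
  by apply: val_inj; rewrite rmorphM /= rees_monomialE // rees_mul_top_monomial // gw0 mul0r.
exact: raddf0.
Qed.

End TopDegree.
End AssociatedGraded.

Theorem corollary3p4 (R : comNzRingType) (m I : R -> Prop) (r : nat)
  (hR : gorenstein_zero_dim_local m)
  (hI : is_ideal I) (hIm : forall x, I x -> m x)
  (hr : exists x, idealpow I r x /\ x <> 0)
  (hr1 : forall x, idealpow I r.+1 x -> x = 0)
  (hG : gorenstein_zero_dim (assoc_graded I)) :
  forall i : nat, (i <= r)%N -> faithful_graded_piece I i.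
Proof.
move=> i le_ir a ha; apply: contrapT => nIa.
have aIr x : idealpow I r x -> a * x = 0.
  by move/(annihilates_graded_piece_le le_ir ha); exact: hr1.
have [w [hw w0]] := hr.
have A0 : \pi_(assoc_graded I) (rees_monomial I a 0) <> 0.
  by apply: gr_monomial_neq0 (idealpow0 a) _ => /(idealpow1 hI).
have T0 : \pi_(assoc_graded I) (rees_monomial I w r) <> 0.
  by apply: gr_monomial_neq0 hw _ => /hr1.
have [mG [hN hZ hL [_ socle_simple]]] := hG.
have [g [socT gT0]] := socle_multiple hN hZ hL T0.
have [h [socA hA0]] := socle_multiple hN hZ hL A0.
have [c gTE] := socle_simple _ _ socA socT hA0.
by apply/gT0/(gr_top_monomial_meet_ann hr1 aIr hw); rewrite gTE mulrA.
Qed.
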